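(* Let $a<b$, $\alpha>0$, $m=\frac{a+b}{2}$. Let $h:[a,b]\to\mathbb{R}$ be strictly increasing and continuously differentiable. Let $f$ be differentiable on an open interval $I\supseteq[h(a),h(b)]$ with $f'$ integrable on $[h(a),h(b)]$ and $|f'|$ convex on $[h(a),h(b)]$, and let $g:[a,b]\to\mathbb{R}$ be continuous. Put $D=h(b)-h(a)$, $U=h(m)-h(a)$, $V=h(b)-h(m)$. Then $$\Big|f(h(m))\Big[(J^{\alpha}_{m^-,h}g)(a)+(J^{\alpha}_{m^+,h}g)(b)\Big]-\Big[(J^{\alpha}_{m^-,h}(g\cdot(f\circ h)))(a)+(J^{\alpha}_{m^+,h}(g\cdot(f\circ h)))(b)\Big]\Big|$$ $$\le \frac{\|g\|_{\infty,[a,m]}}{D\,\Gamma(\alpha+1)}\Big\{|f'(h(a))|\Big[\frac{D\,U^{\alpha+1}}{\alpha+1}-\frac{U^{\alpha+2}}{\alpha+2}\Big]+|f'(h(b))|\frac{U^{\alpha+2}}{\alpha+2}\Big\}$$ $$+\frac{\|g\|_{\infty,[m,b]}}{D\,\Gamma(\alpha+1)}\Big\{|f'(h(b))|\Big[\frac{D\,V^{\alpha+1}}{\alpha+1}-\frac{V^{\alpha+2}}{\alpha+2}\Big]+|f'(h(a))|\frac{V^{\alpha+2}}{\alpha+2}\Big\}.$$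
   Context: Generalized fractional integrals with respect to $h$: for $c<d$ in $[a,b]$ and integrable $\varphi$, $(J^{\alpha}_{c^+,h}\varphi)(x)=\frac{1}{\Gamma(\alpha)}\int_c^x (h(x)-h(t))^{\alpha-1}h'(t)\varphi(t)\,dt$ for $x\in(c,d]$, and $(J^{\alpha}_{d^-,h}\varphi)(x)=\frac{1}{\Gamma(\alpha)}\int_x^d (h(t)-h(x))^{\alpha-1}h'(t)\varphi(t)\,dt$ for $x\in[c,d)$. Thus $(J^{\alpha}_{m^-,h}\varphi)(a)=\frac{1}{\Gamma(\alpha)}\int_a^m (h(t)-h(a))^{\alpha-1}h'(t)\varphi(t)\,dt$ and $(J^{\alpha}_{m^+,h}\varphi)(b)=\frac{1}{\Gamma(\alpha)}\int_m^b (h(b)-h(t))^{\alpha-1}h'(t)\varphi(t)\,dt$. $g\cdot(f\circ h)$ denotes $t\mapsto g(t)f(h(t))$. For a subinterval $J\subseteq[a,b]$, $\|g\|_{\infty,J}=\sup_{t\in J}|g(t)|$. *)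

From Stdlib Require Import Reals Lra ClassicalEpsilon.
Open Scope R_scope.

(* The unique real satisfying P, if one exists (0 otherwise).  Used only for
   predicates with at most one solution (limits, least upper bounds). *)
Definition choose_R (P : R -> Prop) : R :=
  match excluded_middle_informative (exists x, P x) with
  | left H => proj1_sig (constructive_indefinite_description P H)
  | right _ => 0
  end.

(* Improper Riemann integral over the open interval (c,d): f is Riemann
   integrable on every [x,y] with c < x <= y < d, and the integral over [x,y]
   tends to l as x -> c+ and y -> d-. *)
Definition is_impint (f : R -> R) (c d l : R) : Prop :=
  (forall x y, c < x -> x <= y -> y < d -> inhabited (Riemann_integrable f x y)) /\
  forall eps, 0 < eps -> exists del, 0 < del /\
    forall x y (pr : Riemann_integrable f x y),
      c < x < c + del -> d - del < y < d -> Rabs (RiemannInt pr - l) < eps.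

Definition impint (f : R -> R) (c d : R) : R := choose_R (is_impint f c d).

Definition is_impint_inf (f : R -> R) (c l : R) : Prop :=
  (forall x y, c < x -> x <= y -> inhabited (Riemann_integrable f x y)) /\
  forall eps, 0 < eps -> exists del, 0 < del /\ exists M,
    forall x y (pr : Riemann_integrable f x y),
      c < x < c + del -> M < y -> Rabs (RiemannInt pr - l) < eps.

Definition Gamma (s : R) : R :=
  choose_R (is_impint_inf (fun t => Rpower t (s - 1) * exp (- t)) 0).

(* Generalized fractional integrals with respect to h (hd is h').
   J_left  alpha h hd phi c x = (J^alpha_{c+,h} phi)(x)
     = 1/Gamma(alpha) int_c^x (h(x)-h(t))^(alpha-1) h'(t) phi(t) dt
   J_right alpha h hd phi d x = (J^alpha_{d-,h} phi)(x)
     = 1/Gamma(alpha) int_x^d (h(t)-h(x))^(alpha-1) h'(t) phi(t) dt *)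
Definition J_left (alpha : R) (h hd phi : R -> R) (c x : R) : R :=
  / Gamma alpha *
  impint (fun t => Rpower (h x - h t) (alpha - 1) * hd t * phi t) c x.

Definition J_right (alpha : R) (h hd phi : R -> R) (d x : R) : R :=
  / Gamma alpha *
  impint (fun t => Rpower (h t - h x) (alpha - 1) * hd t * phi t) x d.

Definition sup_norm (g : R -> R) (c d : R) : R :=
  choose_R (is_lub (fun y => exists t, c <= t <= d /\ y = Rabs (g t))).

Definition cont_on (f : R -> R) (c d : R) : Prop :=
  forall t, c <= t <= d -> forall eps, 0 < eps -> exists del, 0 < del /\
    forall s, c <= s <= d -> Rabs (s - t) < del -> Rabs (f s - f t) < eps.

Definition deriv_within (f : R -> R) (c d t l : R) : Prop :=
  forall eps, 0 < eps -> exists del, 0 < del /\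
    forall s, c <= s <= d -> s <> t -> Rabs (s - t) < del ->
      Rabs ((f s - f t) / (s - t) - l) < eps.

Definition convex_on (F : R -> R) (c d : R) : Prop :=
  forall x y lam, c <= x <= d -> c <= y <= d -> 0 <= lam <= 1 ->
    F (lam * x + (1 - lam) * y) <= lam * F x + (1 - lam) * F y.

(* Split each side at the midpoint.  On [a, m] the integrand of
   f(h m) J g - J (g (f o h)) is the kernel (h t - h a)^(alpha-1) h'(t) times
   g t (f (h m) - f (h t)).  Convexity puts |f'| under its chord on [h a, h b],
   so the mean value theorem bounds |f (h m) - f (h t)| by the increment of the
   chord's primitive, a quadratic polynomial in x = h t - h a.  Substituting x,
   the kernel times that polynomial integrates in closed form, which gives the
   first bracket after dividing by Gamma(alpha) and using
   Gamma(alpha+1) = alpha Gamma(alpha).  The half [m, b] is the half [a, m] of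
   the data reflected through t |-> -t. *)

From Stdlib Require Import Reals Lra Classical_Prop ClassicalEpsilon Factorial.
From Coquelicot Require Import Coquelicot.
Open Scope R_scope.

Lemma choose_R_unique (P : R -> Prop) l :
  P l -> (forall l', P l' -> l' = l) -> choose_R P = l.
Proof.
  intros Hl Hu. unfold choose_R.
  destruct (excluded_middle_informative (exists x, P x)) as [H|H].
  - apply Hu. exact (proj2_sig (constructive_indefinite_description P H)).
  - exfalso. apply H. exists l. exact Hl.
Qed.

Lemma choose_R_spec (P : R -> Prop) : (exists x, P x) -> P (choose_R P).
Proof.
  intros He. unfold choose_R.
  destruct (excluded_middle_informative (exists x, P x)) as [H|H].
  - exact (proj2_sig (constructive_indefinite_description P H)).
  - contradiction.
Qed.

Lemma continuity_pt_eps (f : R -> R) t :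
  continuity_pt f t <-> (forall eps, 0 < eps -> exists del, 0 < del /\
     forall s, Rabs (s - t) < del -> Rabs (f s - f t) < eps).
Proof.
  split.
  - intros H eps He. destruct (H eps He) as [alp [Ha Hx]].
    exists alp. split; [lra|]. intros s Hs.
    destruct (Req_dec s t) as [->|Hne].
    + rewrite Rminus_diag, Rabs_R0. exact He.
    + apply (Hx s). split; [split; [exact I| auto]| exact Hs].
  - intros H eps He. destruct (H eps He) as [del [Hd Hx]].
    exists del. split; [lra|]. intros s [_ Hs]. apply Hx. exact Hs.
Qed.

Lemma cont_on_continuity_pt (f : R -> R) a b t :
  cont_on f a b -> a < t < b -> continuity_pt f t.
Proof.
  intros H Ht. apply continuity_pt_eps. intros eps He.
  destruct (H t ltac:(lra) eps He) as [del [Hd Hx]].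
  exists (Rmin del (Rmin (t - a) (b - t))). split.
  - apply Rmin_pos; [lra| apply Rmin_pos; lra].
  - intros s Hs. apply Rabs_def2 in Hs as Hs'.
    pose proof (Rmin_l del (Rmin (t - a) (b - t))).
    pose proof (Rmin_r del (Rmin (t - a) (b - t))).
    pose proof (Rmin_l (t - a) (b - t)). pose proof (Rmin_r (t - a) (b - t)).
    apply Hx; lra.
Qed.

Lemma deriv_within_derivable_pt_lim (f : R -> R) a b t l :
  deriv_within f a b t l -> a < t < b -> derivable_pt_lim f t l.
Proof.
  intros H Ht eps He. destruct (H eps He) as [del [Hd Hx]].
  assert (Hp : 0 < Rmin del (Rmin (t - a) (b - t))).
  { apply Rmin_pos; [lra| apply Rmin_pos; lra]. }
  exists (mkposreal _ Hp). intros e He0 Hhe. simpl in Hhe.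
  pose proof (Rmin_l del (Rmin (t - a) (b - t))).
  pose proof (Rmin_r del (Rmin (t - a) (b - t))).
  pose proof (Rmin_l (t - a) (b - t)). pose proof (Rmin_r (t - a) (b - t)).
  apply Rabs_def2 in Hhe as Hhe'.
  replace e with ((t + e) - t) at 2 by ring.
  apply Hx; [lra | lra | replace (t + e - t) with e by ring; lra].
Qed.

Lemma deriv_within_continuous (f : R -> R) a b t l :
  deriv_within f a b t l -> forall eps, 0 < eps -> exists del, 0 < del /\
    forall s, a <= s <= b -> Rabs (s - t) < del -> Rabs (f s - f t) < eps.
Proof.
  intros H eps He. destruct (H 1 Rlt_0_1) as [del [Hd Hx]].
  assert (Hl : 0 < Rabs l + 1) by (pose proof (Rabs_pos l); lra).
  exists (Rmin del (eps / (Rabs l + 1))). split.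
  { apply Rmin_pos; [lra|]. apply Rdiv_lt_0_compat; lra. }
  intros s Hs Hst.
  destruct (Req_dec s t) as [->|Hne].
  { rewrite Rminus_diag, Rabs_R0. exact He. }
  pose proof (Rmin_l del (eps / (Rabs l + 1))).
  pose proof (Rmin_r del (eps / (Rabs l + 1))).
  specialize (Hx s Hs Hne ltac:(lra)).
  assert (Hst0 : s - t <> 0) by lra.
  replace (f s - f t) with (((f s - f t) / (s - t) - l) * (s - t) + l * (s - t))
    by (field; auto).
  eapply Rle_lt_trans; [apply Rabs_triang|]. rewrite !Rabs_mult.
  assert (Rabs (s - t) * (Rabs l + 1) < eps).
  { apply Rlt_le_trans with (eps / (Rabs l + 1) * (Rabs l + 1)).
    - apply Rmult_lt_compat_r; lra.
    - right; field; lra. }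
  pose proof (Rabs_pos l). pose proof (Rabs_pos (s - t)). nra.
Qed.

Lemma derivable_pt_lim_nonneg_of_increasing (h hd : R -> R) a b t :
  (forall x y, a <= x <= b -> a <= y <= b -> x < y -> h x < h y) ->
  a < t < b -> derivable_pt_lim h t (hd t) -> 0 <= hd t.
Proof.
  intros Hm Ht Hd. apply Rnot_lt_le. intros Hneg.
  destruct (Hd (- hd t) ltac:(lra)) as [del K].
  pose proof (cond_pos del).
  set (e := Rmin del (b - t) / 2).
  pose proof (Rmin_l del (b - t)). pose proof (Rmin_r del (b - t)).
  assert (He : 0 < e) by (unfold e; assert (0 < Rmin del (b - t)) by (apply Rmin_pos; lra); lra).
  specialize (K e ltac:(lra) ltac:(rewrite Rabs_right; unfold e in *; lra)).
  assert (h t < h (t + e)) by (apply Hm; unfold e in *; lra).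
  assert (0 < (h (t + e) - h t) / e) by (apply Rdiv_lt_0_compat; lra).
  apply Rabs_def2 in K. lra.
Qed.

(** * Improper Riemann integrals *)

Lemma ex_RInt_lincomb F G x y p q :
  ex_RInt F x y -> ex_RInt G x y -> ex_RInt (fun t => p * F t + q * G t) x y.
Proof.
  intros H1 H2.
  apply (@ex_RInt_plus R_NormedModule (fun t => scal p (F t)) (fun t => scal q (G t)));
    apply (@ex_RInt_scal R_NormedModule); auto.
Qed.

Lemma RInt_lincomb F G x y p q : ex_RInt F x y -> ex_RInt G x y ->
  RInt (fun t => p * F t + q * G t) x y = p * RInt F x y + q * RInt G x y.
Proof.
  intros H1 H2. apply is_RInt_unique.
  apply (@is_RInt_plus R_NormedModule (fun t => scal p (F t)) (fun t => scal q (G t))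
           x y (scal p (RInt F x y)) (scal q (RInt G x y)));
    apply (@is_RInt_scal R_NormedModule), (@RInt_correct R_CompleteNormedModule); auto.
Qed.

Lemma ex_RInt_continuity_pt F c d : (forall t, c < t < d -> continuity_pt F t) ->
  forall x y, c < x -> x <= y -> y < d -> ex_RInt F x y.
Proof.
  intros H x y Hx Hxy Hy. apply (@ex_RInt_continuous R_CompleteNormedModule).
  intros z Hz. rewrite Rmin_left in Hz by auto. rewrite Rmax_right in Hz by auto.
  apply continuity_pt_filterlim. apply H; lra.
Qed.

Lemma RInt_primitive P F x y : x <= y ->
  (forall t, x <= t <= y -> derivable_pt_lim P t (F t)) ->
  (forall t, x <= t <= y -> continuity_pt F t) -> RInt F x y = P y - P x.
Proof.
  intros Hxy HD HC. apply is_RInt_unique.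
  apply (@is_RInt_derive R_CompleteNormedModule P F x y).
  - intros z Hz. rewrite Rmin_left in Hz by lra. rewrite Rmax_right in Hz by lra.
    apply is_derive_Reals. apply HD; lra.
  - intros z Hz. rewrite Rmin_left in Hz by lra. rewrite Rmax_right in Hz by lra.
    apply continuity_pt_filterlim. apply HC; lra.
Qed.

Lemma RInt_le_of_nonneg H x y x' y' :
  (forall u v, x' <= u -> u <= v -> v <= y' -> ex_RInt H u v) ->
  (forall t, x' <= t <= y' -> 0 <= H t) -> x' <= x -> x <= y -> y <= y' ->
  RInt H x y <= RInt H x' y'.
Proof.
  intros I Hp H1 H2 H3.
  rewrite <- (@RInt_Chasles R_CompleteNormedModule H x' x y') by (apply I; lra).
  rewrite <- (@RInt_Chasles R_CompleteNormedModule H x y y') by (apply I; lra).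
  assert (0 <= RInt H x' x) by (apply RInt_ge_0; [lra|apply I; lra|intros; apply Hp; lra]).
  assert (0 <= RInt H y y') by (apply RInt_ge_0; [lra|apply I; lra|intros; apply Hp; lra]).
  unfold plus; simpl. lra.
Qed.

(* [is_impint] in terms of Coquelicot's [RInt]; taking [del <= (d - c) / 2]
   keeps the two endpoints ordered. *)
Definition is_improper_RInt (F : R -> R) (c d l : R) : Prop :=
  (forall x y, c < x -> x <= y -> y < d -> ex_RInt F x y) /\
  forall eps, 0 < eps -> exists del, 0 < del /\ del <= (d - c) / 2 /\
    forall x y, c < x < c + del -> d - del < y < d -> Rabs (RInt F x y - l) < eps.

Lemma is_improper_RInt_le F G c d l1 l2 : c < d ->
  is_improper_RInt F c d l1 -> is_improper_RInt G c d l2 ->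
  (forall t, c < t < d -> F t <= G t) -> l1 <= l2.
Proof.
  intros Hcd [I1 H1] [I2 H2] Hle.
  apply le_epsilon. intros eps He.
  destruct (H1 (eps/2) ltac:(lra)) as [d1 [Hd1 [Hd1c K1]]].
  destruct (H2 (eps/2) ltac:(lra)) as [d2 [Hd2 [Hd2c K2]]].
  set (e := Rmin d1 d2 / 2).
  assert (0 < Rmin d1 d2) by (apply Rmin_pos; lra).
  pose proof (Rmin_l d1 d2). pose proof (Rmin_r d1 d2).
  specialize (K1 (c + e) (d - e) ltac:(unfold e; lra) ltac:(unfold e; lra)).
  specialize (K2 (c + e) (d - e) ltac:(unfold e; lra) ltac:(unfold e; lra)).
  assert (RInt F (c + e) (d - e) <= RInt G (c + e) (d - e)).
  { apply RInt_le; unfold e in *; try lra; [apply I1 | apply I2 |]; try lra.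
    intros t Ht; apply Hle; lra. }
  apply Rabs_def2 in K1. apply Rabs_def2 in K2. lra.
Qed.

Lemma is_improper_RInt_unique F c d l1 l2 : c < d ->
  is_improper_RInt F c d l1 -> is_improper_RInt F c d l2 -> l1 = l2.
Proof.
  intros Hcd H1 H2.
  apply Rle_antisym; apply (is_improper_RInt_le F F c d); auto; intros; lra.
Qed.

Lemma is_improper_RInt_impint F c d l : c < d ->
  is_improper_RInt F c d l -> impint F c d = l.
Proof.
  intros Hcd HF. unfold impint. apply choose_R_unique.
  - destruct HF as [Hi Hl]. split.
    + intros x y Hx Hxy Hy. constructor. apply ex_RInt_Reals_0. apply Hi; auto.
    + intros eps He. destruct (Hl eps He) as [del [Hd [_ H]]].
      exists del. split; auto. intros x y pr Hx Hy.
      rewrite <- (RInt_Reals F x y pr). apply H; auto.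
  - intros l' [Hi Hl]. apply (is_improper_RInt_unique F c d); auto. split.
    + intros x y Hx Hxy Hy. destruct (Hi x y Hx Hxy Hy) as [pr].
      apply ex_RInt_Reals_1. exact pr.
    + intros eps He. destruct (Hl eps He) as [del [Hd H]].
      exists (Rmin del ((d - c) / 2)). split; [apply Rmin_pos; lra|].
      split; [apply Rmin_r|]. intros x y Hx Hy.
      pose proof (Rmin_l del ((d - c) / 2)). pose proof (Rmin_r del ((d - c) / 2)).
      destruct (Hi x y ltac:(lra) ltac:(lra) ltac:(lra)) as [pr].
      rewrite (RInt_Reals F x y pr). apply H; lra.
Qed.

Lemma is_improper_RInt_ext F G c d l : (forall t, c < t < d -> F t = G t) ->
  is_improper_RInt F c d l -> is_improper_RInt G c d l.
Proof.
  intros He [I1 H1].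
  assert (Hext : forall x y, c < x -> x <= y -> y < d ->
            forall t, Rmin x y < t < Rmax x y -> F t = G t).
  { intros x y Hx Hxy Hy t Ht.
    rewrite Rmin_left in Ht by auto. rewrite Rmax_right in Ht by auto. apply He; lra. }
  split.
  - intros x y Hx Hxy Hy.
    apply (@ex_RInt_ext R_NormedModule F); [apply Hext | apply I1]; auto.
  - intros eps Heps. destruct (H1 eps Heps) as [del [Hd [Hd2 K]]].
    exists del. split; auto. split; auto. intros x y Hx Hy.
    rewrite <- (@RInt_ext R_CompleteNormedModule F G); [apply K; auto|].
    apply Hext; lra.
Qed.

Lemma is_improper_RInt_lincomb F G c d l1 l2 p q :
  is_improper_RInt F c d l1 -> is_improper_RInt G c d l2 ->
  is_improper_RInt (fun t => p * F t + q * G t) c d (p * l1 + q * l2).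
Proof.
  intros [I1 H1] [I2 H2]. split.
  - intros x y Hx Hxy Hy. apply ex_RInt_lincomb; [apply I1|apply I2]; auto.
  - intros eps He.
    set (k := Rabs p + Rabs q + 1).
    assert (Hk : 0 < k) by (unfold k; pose proof (Rabs_pos p); pose proof (Rabs_pos q); lra).
    assert (He' : 0 < eps / (2 * k)) by (apply Rdiv_lt_0_compat; lra).
    destruct (H1 _ He') as [d1 [Hd1 [Hd1' K1]]].
    destruct (H2 _ He') as [d2 [Hd2 [Hd2' K2]]].
    exists (Rmin d1 d2). split; [apply Rmin_pos; auto|].
    pose proof (Rmin_l d1 d2). pose proof (Rmin_r d1 d2).
    split; [lra|]. intros x y Hx Hy.
    rewrite RInt_lincomb by (first [apply I1 | apply I2]; lra).
    specialize (K1 x y ltac:(lra) ltac:(lra)). specialize (K2 x y ltac:(lra) ltac:(lra)).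
    replace (p * RInt F x y + q * RInt G x y - (p * l1 + q * l2))
      with (p * (RInt F x y - l1) + q * (RInt G x y - l2)) by ring.
    eapply Rle_lt_trans; [apply Rabs_triang|]. rewrite !Rabs_mult.
    assert (Rabs p * Rabs (RInt F x y - l1) <= Rabs p * (eps / (2 * k)))
      by (apply Rmult_le_compat_l; [apply Rabs_pos|lra]).
    assert (Rabs q * Rabs (RInt G x y - l2) <= Rabs q * (eps / (2 * k)))
      by (apply Rmult_le_compat_l; [apply Rabs_pos|lra]).
    assert (Rabs p * (eps / (2 * k)) + Rabs q * (eps / (2 * k)) + eps / (2 * k) = eps / 2)
      by (unfold k in *; field; lra).
    lra.
Qed.

Lemma is_improper_RInt_reflect F c d l :
  is_improper_RInt (fun t => F (- t)) (- d) (- c) l -> is_improper_RInt F c d l.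
Proof.
  intros [I H].
  assert (Hrefl : forall x y, c < x -> x <= y -> y < d ->
            is_RInt F x y (RInt (fun t => F (- t)) (- y) (- x))).
  { intros x y Hx Hxy Hy.
    pose proof (@RInt_correct R_CompleteNormedModule _ _ _ (I (- y) (- x) ltac:(lra) ltac:(lra) ltac:(lra))) as K.
    apply (@is_RInt_comp_opp R_NormedModule) in K.
    apply (@is_RInt_swap R_NormedModule), (@is_RInt_opp R_NormedModule) in K.
    rewrite opp_opp in K.
    eapply (@is_RInt_ext R_NormedModule); [|exact K].
    intros t _. simpl. rewrite opp_opp, Ropp_involutive. reflexivity. }
  split.
  - intros x y Hx Hxy Hy. eexists. apply Hrefl; auto.
  - intros eps He. destruct (H eps He) as [del [Hd [Hd2 K]]].
    exists del. split; auto. split; [lra|]. intros x y Hx Hy.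
    rewrite (is_RInt_unique F x y _ (Hrefl x y ltac:(lra) ltac:(lra) ltac:(lra))).
    apply K; lra.
Qed.

Lemma RInt_le_improper H c d l : is_improper_RInt H c d l ->
  (forall t, c < t < d -> 0 <= H t) ->
  forall x y, c < x -> x <= y -> y < d -> RInt H x y <= l.
Proof.
  intros [I K] Hp x y Hx Hxy Hy. apply le_epsilon. intros eps He.
  destruct (K eps He) as [del [Hd [_ K1]]].
  assert (0 < Rmin del (x - c)) by (apply Rmin_pos; lra).
  assert (0 < Rmin del (d - y)) by (apply Rmin_pos; lra).
  pose proof (Rmin_l del (x - c)). pose proof (Rmin_r del (x - c)).
  pose proof (Rmin_l del (d - y)). pose proof (Rmin_r del (d - y)).
  set (x' := c + Rmin del (x - c) / 2). set (y' := d - Rmin del (d - y) / 2).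
  specialize (K1 x' y' ltac:(unfold x'; lra) ltac:(unfold y'; lra)).
  apply Rabs_def2 in K1.
  assert (RInt H x y <= RInt H x' y').
  { apply RInt_le_of_nonneg; unfold x', y' in *; try lra.
    - intros u v Hu Huv Hv. apply I; lra.
    - intros t Ht. apply Hp; lra. }
  lra.
Qed.

(* The limit is the supremum of the integrals over compact subintervals. *)
Lemma is_improper_RInt_bounded H c d B : c < d ->
  (forall x y, c < x -> x <= y -> y < d -> ex_RInt H x y) ->
  (forall t, c < t < d -> 0 <= H t) ->
  (forall x y, c < x -> x <= y -> y < d -> RInt H x y <= B) ->
  exists l, is_improper_RInt H c d l.
Proof.
  intros Hcd I Hp HB.
  set (E := fun v => exists x y, c < x /\ x <= y /\ y < d /\ v = RInt H x y).
  assert (Hb : bound E).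
  { exists B. intros v [x [y [? [? [? ->]]]]]. apply HB; auto. }
  assert (Hne : exists v, E v).
  { exists (RInt H ((c+c+d)/3) ((c+c+d)/3)). exists ((c+c+d)/3), ((c+c+d)/3). repeat split; lra. }
  destruct (completeness E Hb Hne) as [l [Hub Hlub]].
  exists l. split; auto.
  intros eps He.
  assert (Hex : exists x0 y0, c < x0 /\ x0 <= y0 /\ y0 < d /\ l - eps < RInt H x0 y0).
  { apply NNPP. intros Hn.
    assert (l <= l - eps); [|lra].
    apply Hlub. intros v [x [y [? [? [? ->]]]]].
    apply Rnot_lt_le. intros Hlt. apply Hn. exists x, y. auto. }
  destruct Hex as [x0 [y0 [Hx0 [Hxy0 [Hy0 Hl0]]]]].
  pose proof (Rmin_l (Rmin (x0 - c) (d - y0)) ((d - c) / 2)).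
  pose proof (Rmin_r (Rmin (x0 - c) (d - y0)) ((d - c) / 2)).
  pose proof (Rmin_l (x0 - c) (d - y0)). pose proof (Rmin_r (x0 - c) (d - y0)).
  assert (0 < Rmin (Rmin (x0 - c) (d - y0)) ((d - c) / 2))
    by (apply Rmin_pos; [apply Rmin_pos|]; lra).
  set (del := Rmin (Rmin (x0 - c) (d - y0)) ((d - c) / 2)) in *.
  exists del. split; [lra|]. split; [lra|].
  intros x y Hx Hy.
  assert (RInt H x0 y0 <= RInt H x y).
  { apply RInt_le_of_nonneg; try lra.
    - intros u v Hu Huv Hv. apply I; lra.
    - intros t Ht. apply Hp; lra. }
  assert (RInt H x y <= l) by (apply Hub; exists x, y; repeat split; lra).
  apply Rabs_def1; lra.
Qed.

Lemma is_improper_RInt_dominated F W c d w : c < d ->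
  (forall t, c < t < d -> continuity_pt F t) ->
  (forall t, c < t < d -> Rabs (F t) <= W t) -> is_improper_RInt W c d w ->
  exists l, is_improper_RInt F c d l /\ Rabs l <= w.
Proof.
  intros Hcd CF Hdom HW.
  pose proof (ex_RInt_continuity_pt F c d CF) as IF.
  pose proof HW as [IW _].
  set (H := fun t => 1 * F t + 1 * W t).
  assert (IH : forall x y, c < x -> x <= y -> y < d -> ex_RInt H x y).
  { intros x y ? ? ?. apply ex_RInt_lincomb; [apply IF|apply IW]; auto. }
  assert (Hbounds : forall t, c < t < d -> - W t <= F t <= W t).
  { intros t Ht. specialize (Hdom t Ht). apply Rabs_le_between in Hdom. lra. }
  assert (HWp : forall t, c < t < d -> 0 <= W t).
  { intros t Ht. specialize (Hbounds t Ht). lra. }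
  destruct (is_improper_RInt_bounded H c d (2 * w) Hcd IH) as [lH HlH].
  { intros t Ht. specialize (Hbounds t Ht). unfold H. lra. }
  { intros x y Hx Hxy Hy.
    apply Rle_trans with (RInt (fun t => 2 * W t + 0 * W t) x y).
    - apply RInt_le; auto; [apply ex_RInt_lincomb; apply IW; auto|].
      intros t Ht. specialize (Hbounds t ltac:(lra)). unfold H. lra.
    - rewrite RInt_lincomb by (apply IW; auto).
      pose proof (RInt_le_improper W c d w HW HWp x y Hx Hxy Hy). lra. }
  assert (HF : is_improper_RInt F c d (1 * lH + (-1) * w)).
  { apply is_improper_RInt_ext with (fun t => 1 * H t + (-1) * W t).
    - intros t _. unfold H. ring.
    - apply is_improper_RInt_lincomb; auto. }
  exists (1 * lH + (-1) * w). split; auto.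
  apply Rabs_le. split.
  - assert (HmW : is_improper_RInt (fun t => (-1) * W t + 0 * W t) c d ((-1) * w + 0 * w))
      by (apply is_improper_RInt_lincomb; auto).
    replace (- w) with ((-1) * w + 0 * w) by ring.
    apply (is_improper_RInt_le (fun t => -1 * W t + 0 * W t) F c d); auto.
    intros t Ht. specialize (Hbounds t Ht). lra.
  - apply (is_improper_RInt_le F W c d); auto.
    intros t Ht. specialize (Hbounds t Ht). lra.
Qed.

Lemma is_improper_RInt_primitive F P c d Pc Pd : c < d ->
  (forall x, c < x < d -> derivable_pt_lim P x (F x)) ->
  (forall x, c < x < d -> continuity_pt F x) ->
  (forall eps, 0 < eps -> exists del, 0 < del /\
     forall x, c < x < c + del -> Rabs (P x - Pc) < eps) ->
  (forall eps, 0 < eps -> exists del, 0 < del /\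
     forall x, d - del < x < d -> Rabs (P x - Pd) < eps) ->
  is_improper_RInt F c d (Pd - Pc).
Proof.
  intros Hcd HD HC Lc Ld.
  split; [apply ex_RInt_continuity_pt; auto|].
  intros eps He.
  destruct (Lc (eps/2) ltac:(lra)) as [d1 [Hd1 K1]].
  destruct (Ld (eps/2) ltac:(lra)) as [d2 [Hd2 K2]].
  pose proof (Rmin_l (Rmin d1 d2) ((d - c) / 2)).
  pose proof (Rmin_r (Rmin d1 d2) ((d - c) / 2)).
  pose proof (Rmin_l d1 d2). pose proof (Rmin_r d1 d2).
  assert (0 < Rmin (Rmin d1 d2) ((d - c) / 2)) by (apply Rmin_pos; [apply Rmin_pos|]; lra).
  set (del := Rmin (Rmin d1 d2) ((d - c) / 2)) in *.
  exists del. split; [lra|]. split; [lra|].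
  intros x y Hx Hy.
  rewrite (RInt_primitive P) by (lra || (intros t Ht; first [apply HD | apply HC]; lra)).
  specialize (K1 x ltac:(lra)). specialize (K2 y ltac:(lra)).
  replace (P y - P x - (Pd - Pc)) with ((P y - Pd) - (P x - Pc)) by ring.
  eapply Rle_lt_trans; [apply Rabs_triang|]. rewrite Rabs_Ropp. lra.
Qed.

(** * The weighted kernel integral *)

Definition kernel_primitive (c0 c1 c2 al x : R) : R :=
  c0 / al * Rpower x al + c1 / (al + 1) * Rpower x (al + 1)
  + c2 / (al + 2) * Rpower x (al + 2).

Lemma Rpower_plus_1 x y : 0 < x -> Rpower x (y + 1) = Rpower x y * x.
Proof. intros Hx. rewrite Rpower_plus, Rpower_1; auto. Qed.

Lemma Rpower_plus_2 x y : 0 < x -> Rpower x (y + 2) = Rpower x y * x * x.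
Proof.
  intros Hx. replace (y + 2) with (y + 1 + 1) by ring. rewrite !Rpower_plus_1; auto.
Qed.

Lemma kernel_primitive_derive c0 c1 c2 al x : 0 < al -> 0 < x ->
  derivable_pt_lim (kernel_primitive c0 c1 c2 al) x
    (Rpower x (al - 1) * (c0 + c1 * x + c2 * x * x)).
Proof.
  intros Ha Hx. unfold kernel_primitive.
  replace (Rpower x (al - 1) * (c0 + c1 * x + c2 * x * x))
    with (c0 / al * (al * Rpower x (al - 1))
          + c1 / (al + 1) * ((al + 1) * Rpower x (al + 1 - 1))
          + c2 / (al + 2) * ((al + 2) * Rpower x (al + 2 - 1))).
  - repeat apply derivable_pt_lim_plus;
      apply derivable_pt_lim_scal, derivable_pt_lim_power; auto.
  - replace (al + 1 - 1) with (al - 1 + 1) by ring.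
    replace (al + 2 - 1) with (al - 1 + 2) by ring.
    rewrite Rpower_plus_1, Rpower_plus_2 by auto. field. lra.
Qed.

Lemma Rpower_lt_of_small al eps : 0 < al -> 0 < eps ->
  exists del, 0 < del /\ forall x, 0 < x < del -> Rpower x al < eps.
Proof.
  intros Ha He. exists (Rpower eps (/ al)). split; [apply exp_pos|].
  intros x Hx. replace eps with (Rpower (Rpower eps (/ al)) al).
  - apply Rlt_Rpower_l; auto.
  - rewrite Rpower_mult. replace (/ al * al) with 1 by (field; lra). apply Rpower_1; auto.
Qed.

Lemma kernel_primitive_small c0 c1 c2 al eps : 0 < al -> 0 < eps ->
  exists del, 0 < del /\ forall x, 0 < x < del -> Rabs (kernel_primitive c0 c1 c2 al x) < eps.
Proof.
  intros Ha He.
  set (C := Rabs (c0 / al) + Rabs (c1 / (al + 1)) + Rabs (c2 / (al + 2)) + 1).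
  assert (HC : 0 < C).
  { unfold C. pose proof (Rabs_pos (c0 / al)). pose proof (Rabs_pos (c1 / (al + 1))).
    pose proof (Rabs_pos (c2 / (al + 2))). lra. }
  destruct (Rpower_lt_of_small al (eps / C) Ha ltac:(apply Rdiv_lt_0_compat; lra))
    as [d [Hd K]].
  exists (Rmin d 1). split; [apply Rmin_pos; lra|]. intros x Hx.
  pose proof (Rmin_l d 1). pose proof (Rmin_r d 1).
  specialize (K x ltac:(lra)).
  pose proof (exp_pos (al * ln x)) as Hr. fold (Rpower x al) in Hr.
  unfold kernel_primitive. rewrite Rpower_plus_1, Rpower_plus_2 by lra.
  eapply Rle_lt_trans; [apply Rabs_triang|].
  eapply Rle_lt_trans; [apply Rplus_le_compat_r, Rabs_triang|].
  rewrite !Rabs_mult, !(Rabs_right (Rpower x al)), !(Rabs_right x) by lra.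
  assert (Rabs (c1 / (al + 1)) * (Rpower x al * x) <= Rabs (c1 / (al + 1)) * Rpower x al).
  { apply Rmult_le_compat_l; [apply Rabs_pos|]. nra. }
  assert (Rabs (c2 / (al + 2)) * (Rpower x al * x * x) <= Rabs (c2 / (al + 2)) * Rpower x al).
  { apply Rmult_le_compat_l; [apply Rabs_pos|]. assert (0 <= x * x <= 1) by nra. nra. }
  assert (C * Rpower x al < eps).
  { apply Rlt_le_trans with (C * (eps / C)).
    - apply Rmult_lt_compat_l; lra.
    - right; field; lra. }
  unfold C in *. nra.
Qed.

(* [kernel_primitive (phi t)] is a primitive of the integrand and tends to 0
   with [phi]. *)
Lemma is_improper_RInt_kernel (phi phid : R -> R) c d al c0 c1 c2 :
  0 < al -> c < d ->
  (forall t, c < t <= d -> derivable_pt_lim phi t (phid t)) ->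
  (forall t, c < t < d -> continuity_pt phid t) ->
  (forall t, c < t <= d -> 0 < phi t) ->
  (forall eps, 0 < eps -> exists del, 0 < del /\ forall t, c < t < c + del -> phi t < eps) ->
  is_improper_RInt
    (fun t => Rpower (phi t) (al - 1) * phid t * (c0 + c1 * phi t + c2 * phi t * phi t))
    c d (kernel_primitive c0 c1 c2 al (phi d)).
Proof.
  intros Hal Hcd Hd Hc Hp Hlim.
  set (P := fun t => kernel_primitive c0 c1 c2 al (phi t)).
  assert (HP : forall t, c < t <= d -> derivable_pt_lim P t
    (Rpower (phi t) (al - 1) * phid t * (c0 + c1 * phi t + c2 * phi t * phi t))).
  { intros t Ht.
    replace (Rpower (phi t) (al - 1) * phid t * (c0 + c1 * phi t + c2 * phi t * phi t))
      with (Rpower (phi t) (al - 1) * (c0 + c1 * phi t + c2 * phi t * phi t) * phid t) by ring.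
    apply (derivable_pt_lim_comp phi (kernel_primitive c0 c1 c2 al)); [apply Hd; lra|].
    apply kernel_primitive_derive; auto. }
  rewrite <- (Rminus_0_r (kernel_primitive _ _ _ _ _)).
  apply (is_improper_RInt_primitive _ P); auto.
  - intros t Ht. apply HP; lra.
  - intros t Ht.
    assert (Cphi : continuity_pt phi t)
      by (apply derivable_continuous_pt; exists (phid t); apply Hd; lra).
    repeat apply continuity_pt_mult.
    + apply (continuity_pt_comp phi (fun x => Rpower x (al - 1))); auto.
      apply derivable_continuous_pt. eexists. apply derivable_pt_lim_power, Hp; lra.
    + apply Hc; auto.
    + apply (continuity_pt_comp phi (fun x => c0 + c1 * x + c2 * x * x)); auto. reg.
  - intros eps He.
    destruct (kernel_primitive_small c0 c1 c2 al eps Hal He) as [d1 [Hd1 K1]].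
    destruct (Hlim d1 Hd1) as [d2 [Hd2 K2]].
    exists (Rmin d2 (d - c)). split; [apply Rmin_pos; lra|].
    intros t Ht. pose proof (Rmin_l d2 (d - c)). pose proof (Rmin_r d2 (d - c)).
    rewrite Rminus_0_r. apply K1. split; [apply Hp | apply K2]; lra.
  - assert (Cd : continuity_pt P d)
      by (apply derivable_continuous_pt; eexists; apply HP; lra).
    intros eps He. destruct (proj1 (continuity_pt_eps P d) Cd eps He) as [del [Hdel K]].
    exists del. split; auto. intros t Ht. apply K. rewrite Rabs_left; lra.
Qed.

(** * The Gamma function *)

Lemma pow_mul_exp_neg_le n t : 0 < t -> t ^ n * exp (- t) <= INR (fact (S n)) / t.
Proof.
  intros Ht.
  assert (Hf : 0 < INR (fact (S n))) by (apply lt_0_INR, lt_O_fact).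
  assert (Htay : t ^ S n / INR (fact (S n)) <= exp t).
  { eapply Rle_trans; [|apply (exp_ge_taylor t (S n)); lra].
    rewrite tech5.
    assert (0 <= sum_f_R0 (fun k => t ^ k / INR (fact k)) n).
    { apply cond_pos_sum. intros k. apply Rdiv_le_0_compat.
      - apply pow_le; lra.
      - apply lt_0_INR, lt_O_fact. }
    lra. }
  rewrite exp_Ropp. simpl pow in Htay.
  pose proof (exp_pos t). pose proof (pow_lt t n Ht).
  apply Rmult_le_reg_r with (t * exp t); [nra|].
  replace (t ^ n * / exp t * (t * exp t)) with (t * t ^ n) by (field; lra).
  replace (INR (fact (S n)) / t * (t * exp t)) with (INR (fact (S n)) * exp t) by (field; lra).
  apply Rmult_le_reg_r with (/ INR (fact (S n))); [apply Rinv_0_lt_compat; lra|].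
  replace (INR (fact (S n)) * exp t * / INR (fact (S n))) with (exp t) by (field; lra).
  exact Htay.
Qed.

Lemma Rpower_mul_exp_neg_le r n t : r <= INR n -> 1 <= t ->
  Rpower t r * exp (- t) <= INR (fact (S (S n))) / (t * t).
Proof.
  intros Hr Ht.
  apply Rle_trans with (t ^ n * exp (- t)).
  - apply Rmult_le_compat_r; [left; apply exp_pos|].
    rewrite <- Rpower_pow by lra. apply Rle_Rpower; auto.
  - replace (t ^ n * exp (- t)) with (t ^ S n * exp (- t) / t) by (simpl; field; lra).
    replace (INR (fact (S (S n))) / (t * t)) with (INR (fact (S (S n))) / t / t)
      by (field; lra).
    apply Rmult_le_compat_r; [left; apply Rinv_0_lt_compat; lra|].
    apply pow_mul_exp_neg_le; lra.
Qed.

Lemma Rpower_mul_exp_neg_vanishes s eps : 0 < s -> 0 < eps ->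
  exists del M, 0 < del /\
    (forall x, 0 < x < del -> Rpower x s * exp (- x) < eps) /\
    (forall y, M < y -> Rpower y s * exp (- y) < eps).
Proof.
  intros Hs He.
  destruct (Rpower_lt_of_small s eps Hs He) as [del [Hdel Hsmall]].
  destruct (INR_unbounded s) as [n Hn].
  set (C := INR (fact (S (S n)))).
  assert (HC : 0 < C) by (apply lt_0_INR, lt_O_fact).
  exists del, (Rmax 1 (C / eps)). split; [auto | split].
  - intros x Hx. apply Rle_lt_trans with (Rpower x s); [|apply Hsmall; lra].
    rewrite <- (Rmult_1_r (Rpower x s)) at 2.
    apply Rmult_le_compat_l; [left; apply exp_pos|].
    rewrite <- exp_0. left. apply exp_increasing. lra.
  - intros y Hy. pose proof (Rmax_l 1 (C / eps)). pose proof (Rmax_r 1 (C / eps)).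
    apply Rle_lt_trans with (C / (y * y)); [apply Rpower_mul_exp_neg_le; lra|].
    apply Rmult_lt_reg_r with (y * y / eps); [apply Rdiv_lt_0_compat; nra|].
    replace (C / (y * y) * (y * y / eps)) with (C / eps) by (field; lra).
    replace (eps * (y * y / eps)) with (y * y) by (field; lra). nra.
Qed.

(* [is_impint_inf] in terms of Coquelicot's [RInt]. *)
Definition is_improper_RInt_inf (F : R -> R) (c l : R) : Prop :=
  (forall x y, c < x -> x <= y -> ex_RInt F x y) /\
  forall eps, 0 < eps -> exists del, 0 < del /\ exists M, c + del <= M /\
    forall x y, c < x < c + del -> M < y -> Rabs (RInt F x y - l) < eps.

Lemma is_improper_RInt_inf_unique F c l1 l2 :
  is_improper_RInt_inf F c l1 -> is_improper_RInt_inf F c l2 -> l1 = l2.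
Proof.
  intros [_ H1] [_ H2].
  apply Rminus_diag_uniq, Rabs_eq_0, Rle_antisym; [|apply Rabs_pos].
  apply le_epsilon. intros eps He.
  destruct (H1 (eps/2) ltac:(lra)) as [d1 [Hd1 [M1 [HM1 K1]]]].
  destruct (H2 (eps/2) ltac:(lra)) as [d2 [Hd2 [M2 [HM2 K2]]]].
  pose proof (Rmin_l d1 d2). pose proof (Rmin_r d1 d2).
  assert (0 < Rmin d1 d2) by (apply Rmin_pos; auto).
  pose proof (Rmax_l M1 M2). pose proof (Rmax_r M1 M2).
  specialize (K1 (c + Rmin d1 d2 / 2) (Rmax M1 M2 + 1) ltac:(lra) ltac:(lra)).
  specialize (K2 (c + Rmin d1 d2 / 2) (Rmax M1 M2 + 1) ltac:(lra) ltac:(lra)).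
  apply Rabs_def2 in K1. apply Rabs_def2 in K2. apply Rabs_le. lra.
Qed.

Lemma RInt_le_improper_inf H c l : is_improper_RInt_inf H c l ->
  (forall t, c < t -> 0 <= H t) ->
  forall x y, c < x -> x <= y -> RInt H x y <= l.
Proof.
  intros [I K] Hp x y Hx Hxy. apply le_epsilon. intros eps He.
  destruct (K eps He) as [del [Hd [M [HM K1]]]].
  assert (0 < Rmin del (x - c)) by (apply Rmin_pos; lra).
  pose proof (Rmin_l del (x - c)). pose proof (Rmin_r del (x - c)).
  pose proof (Rmax_l M y). pose proof (Rmax_r M y).
  specialize (K1 (c + Rmin del (x - c) / 2) (Rmax M y + 1) ltac:(lra) ltac:(lra)).
  apply Rabs_def2 in K1.
  assert (RInt H x y <= RInt H (c + Rmin del (x - c) / 2) (Rmax M y + 1)).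
  { apply RInt_le_of_nonneg; try lra.
    - intros u v Hu Huv Hv. apply I; lra.
    - intros t Ht. apply Hp; lra. }
  lra.
Qed.

Lemma is_improper_RInt_inf_bounded H c B :
  (forall x y, c < x -> x <= y -> ex_RInt H x y) ->
  (forall t, c < t -> 0 <= H t) ->
  (forall x y, c < x -> x <= y -> RInt H x y <= B) ->
  exists l, is_improper_RInt_inf H c l.
Proof.
  intros I Hp HB.
  set (E := fun v => exists x y, c < x /\ x <= y /\ v = RInt H x y).
  assert (Hb : bound E).
  { exists B. intros v [x [y [? [? ->]]]]. apply HB; auto. }
  assert (Hne : exists v, E v).
  { exists (RInt H (c + 1) (c + 1)), (c + 1), (c + 1). repeat split; lra. }
  destruct (completeness E Hb Hne) as [l [Hub Hlub]].
  exists l. split; auto.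
  intros eps He.
  assert (Hex : exists x0 y0, c < x0 /\ x0 <= y0 /\ l - eps < RInt H x0 y0).
  { apply NNPP. intros Hn.
    assert (l <= l - eps); [|lra].
    apply Hlub. intros v [x [y [? [? ->]]]].
    apply Rnot_lt_le. intros Hlt. apply Hn. exists x, y. auto. }
  destruct Hex as [x0 [y0 [Hx0 [Hxy0 Hl0]]]].
  exists (x0 - c). split; [lra|]. exists y0. split; [lra|].
  intros x y Hx Hy.
  assert (RInt H x0 y0 <= RInt H x y).
  { apply RInt_le_of_nonneg; try lra.
    - intros u v Hu Huv Hv. apply I; lra.
    - intros t Ht. apply Hp; lra. }
  assert (RInt H x y <= l) by (apply Hub; exists x, y; repeat split; lra).
  apply Rabs_def1; lra.
Qed.

Definition gamma_integrand (s t : R) : R := Rpower t (s - 1) * exp (- t).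

Lemma Gamma_eq s l : is_improper_RInt_inf (gamma_integrand s) 0 l -> Gamma s = l.
Proof.
  intros H. unfold Gamma. apply choose_R_unique.
  - destruct H as [Hi Hl]. split.
    + intros x y Hx Hxy. constructor. apply ex_RInt_Reals_0. apply Hi; auto.
    + intros eps He. destruct (Hl eps He) as [del [Hd [M [_ K]]]].
      exists del. split; auto. exists M. intros x y pr Hx Hy.
      rewrite <- (RInt_Reals _ x y pr). apply K; auto.
  - intros l' [Hi Hl]. apply (is_improper_RInt_inf_unique (gamma_integrand s) 0); auto.
    split.
    + intros x y Hx Hxy. destruct (Hi x y Hx Hxy) as [pr].
      apply ex_RInt_Reals_1. exact pr.
    + intros eps He. destruct (Hl eps He) as [del [Hd [M K]]].
      exists del. split; auto. exists (Rmax M (0 + del)). split; [apply Rmax_r|].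
      intros x y Hx Hy. pose proof (Rmax_l M (0 + del)). pose proof (Rmax_r M (0 + del)).
      destruct (Hi x y ltac:(lra) ltac:(lra)) as [pr].
      unfold gamma_integrand. rewrite (RInt_Reals _ x y pr). apply K; lra.
Qed.

Lemma gamma_integrand_pos s t : 0 < gamma_integrand s t.
Proof. apply Rmult_lt_0_compat; apply exp_pos. Qed.

Lemma derivable_pt_lim_exp_neg x : derivable_pt_lim (fun t => exp (- t)) x (- exp (- x)).
Proof. apply is_derive_Reals. auto_derive; auto. ring. Qed.

Lemma gamma_integrand_continuous s t : 0 < t -> continuity_pt (gamma_integrand s) t.
Proof.
  intros Ht. apply continuity_pt_mult; apply derivable_continuous_pt; eexists.
  - apply derivable_pt_lim_power; auto.
  - apply derivable_pt_lim_exp_neg.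
Qed.

Lemma ex_RInt_gamma_integrand s x y : 0 < x -> x <= y -> ex_RInt (gamma_integrand s) x y.
Proof.
  intros Hx Hxy. apply (ex_RInt_continuity_pt _ 0 (y + 1)); try lra.
  intros t Ht. apply gamma_integrand_continuous; lra.
Qed.

Lemma RInt_gamma_integrand_le_inv s x : 0 < s -> 0 < x <= 1 ->
  RInt (gamma_integrand s) x 1 <= / s.
Proof.
  intros Hs Hx.
  apply Rle_trans with (RInt (fun t => Rpower t (s - 1)) x 1).
  - apply RInt_le; [lra | apply ex_RInt_gamma_integrand; lra | |].
    + apply (ex_RInt_continuity_pt _ 0 2); try lra. intros t Ht.
      apply derivable_continuous_pt. eexists. apply derivable_pt_lim_power; lra.
    + intros t Ht. unfold gamma_integrand.
      rewrite <- (Rmult_1_r (Rpower t (s - 1))) at 2.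
      apply Rmult_le_compat_l; [left; apply exp_pos|].
      rewrite <- exp_0. left. apply exp_increasing. lra.
  - rewrite (RInt_primitive (fun t => / s * Rpower t s)); [| lra | |].
    + assert (E1 : Rpower 1 s = 1) by (unfold Rpower; rewrite ln_1, Rmult_0_r, exp_0; auto).
      rewrite E1. pose proof (exp_pos (s * ln x)).
      assert (0 < / s) by (apply Rinv_0_lt_compat; lra).
      assert (0 < / s * Rpower x s) by (apply Rmult_lt_0_compat; auto). lra.
    + intros t Ht.
      replace (Rpower t (s - 1)) with (/ s * (s * Rpower t (s - 1))) by (field; lra).
      apply derivable_pt_lim_scal, derivable_pt_lim_power. lra.
    + intros t Ht. apply derivable_continuous_pt. eexists. apply derivable_pt_lim_power. lra.
Qed.

Lemma RInt_gamma_integrand_le_fact s n y : s - 1 <= INR n -> 1 <= y ->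
  RInt (gamma_integrand s) 1 y <= INR (fact (S (S n))).
Proof.
  intros Hn Hy. set (C := INR (fact (S (S n)))).
  assert (HC : 0 < C) by (apply lt_0_INR, lt_O_fact).
  assert (Cinv : forall t, 0 < t -> continuity_pt (fun t => C / (t * t)) t).
  { intros t Ht. apply derivable_continuous_pt. eexists.
    apply is_derive_Reals. auto_derive; [nra | reflexivity]. }
  apply Rle_trans with (RInt (fun t => C / (t * t)) 1 y).
  - apply RInt_le; [lra | apply ex_RInt_gamma_integrand; lra | |].
    + apply (ex_RInt_continuity_pt _ 0 (y + 1)); try lra. intros t Ht. apply Cinv; lra.
    + intros t Ht. apply Rpower_mul_exp_neg_le; lra.
  - rewrite (RInt_primitive (fun t => - C / t)); [| lra | |].
    + assert (0 < C / y) by (apply Rdiv_lt_0_compat; lra).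
      replace (- C / y - - C / 1) with (C - C / y) by (field; lra). lra.
    + intros t Ht. apply is_derive_Reals. auto_derive; [lra|]. field. lra.
    + intros t Ht. apply Cinv; lra.
Qed.

Lemma Gamma_integrable s : 0 < s -> exists l, is_improper_RInt_inf (gamma_integrand s) 0 l.
Proof.
  intros Hs. destruct (INR_unbounded (s - 1)) as [n Hn].
  apply (is_improper_RInt_inf_bounded _ 0 (/ s + INR (fact (S (S n))))).
  - intros x y Hx Hxy. apply ex_RInt_gamma_integrand; lra.
  - intros t Ht. left; apply gamma_integrand_pos.
  - intros x y Hx Hxy.
    pose proof (Rmin_l x 1). pose proof (Rmin_r x 1).
    pose proof (Rmax_l y 1). pose proof (Rmax_r y 1).
    assert (0 < Rmin x 1) by (apply Rmin_pos; lra).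
    apply Rle_trans with (RInt (gamma_integrand s) (Rmin x 1) (Rmax y 1)).
    { apply RInt_le_of_nonneg; try lra.
      - intros u v Hu Huv Hv. apply ex_RInt_gamma_integrand; lra.
      - intros t Ht. left; apply gamma_integrand_pos. }
    rewrite <- (@RInt_Chasles R_CompleteNormedModule _ (Rmin x 1) 1 (Rmax y 1))
      by (apply ex_RInt_gamma_integrand; lra).
    pose proof (RInt_gamma_integrand_le_inv s (Rmin x 1) Hs ltac:(lra)).
    pose proof (RInt_gamma_integrand_le_fact s n (Rmax y 1) ltac:(lra) ltac:(lra)).
    unfold plus; simpl in *. lra.
Qed.

Lemma RInt_gamma_integrand_succ s x y : 0 < x -> x <= y ->
  RInt (gamma_integrand (s + 1)) x y
  = s * RInt (gamma_integrand s) x y + (Rpower x s * exp (- x) - Rpower y s * exp (- y)).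
Proof.
  intros Hx Hxy.
  assert (I : forall r, ex_RInt (gamma_integrand r) x y).
  { intros r. apply (ex_RInt_continuity_pt _ 0 (y + 1)); try lra.
    intros t Ht. apply gamma_integrand_continuous; lra. }
  assert (E : RInt (fun t => 1 * gamma_integrand (s + 1) t + (- s) * gamma_integrand s t) x y
              = - (Rpower y s * exp (- y)) - - (Rpower x s * exp (- x))).
  { apply (RInt_primitive (fun t => - (Rpower t s * exp (- t)))); auto.
    - intros t Ht.
      replace (1 * gamma_integrand (s + 1) t + - s * gamma_integrand s t)
        with (- (s * Rpower t (s - 1) * exp (- t) + Rpower t s * - exp (- t)))
        by (unfold gamma_integrand; replace (s + 1 - 1) with s by ring; ring).
      apply derivable_pt_lim_opp.
      apply (derivable_pt_lim_mult (fun t => Rpower t s) (fun t => exp (- t))).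
      + apply derivable_pt_lim_power; lra.
      + apply derivable_pt_lim_exp_neg.
    - intros t Ht. apply continuity_pt_plus; apply continuity_pt_mult;
        first [apply gamma_integrand_continuous; lra
              | apply continuity_pt_const; intros ? ?; reflexivity]. }
  rewrite RInt_lincomb in E by auto. lra.
Qed.

Lemma Gamma_integral_succ s l : 0 < s -> is_improper_RInt_inf (gamma_integrand s) 0 l ->
  is_improper_RInt_inf (gamma_integrand (s + 1)) 0 (s * l).
Proof.
  intros Hs [_ Hl]. split; [intros x y Hx Hxy; apply ex_RInt_gamma_integrand; lra|].
  intros eps He.
  destruct (Hl (eps / (3 * s))) as [d0 [Hd0 [M0 [HM0 K]]]]; [apply Rdiv_lt_0_compat; lra|].
  destruct (Rpower_mul_exp_neg_vanishes s (eps / 3) Hs ltac:(lra))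
    as [d1 [M1 [Hd1 [Bx By]]]].
  assert (0 < Rmin d0 d1) by (apply Rmin_pos; auto).
  pose proof (Rmin_l d0 d1). pose proof (Rmin_r d0 d1).
  pose proof (Rmax_l (Rmax M0 M1) (0 + Rmin d0 d1)).
  pose proof (Rmax_r (Rmax M0 M1) (0 + Rmin d0 d1)).
  pose proof (Rmax_l M0 M1). pose proof (Rmax_r M0 M1).
  exists (Rmin d0 d1). split; auto. exists (Rmax (Rmax M0 M1) (0 + Rmin d0 d1)).
  split; [lra|]. intros x y Hx Hy.
  specialize (K x y ltac:(lra) ltac:(lra)).
  specialize (Bx x ltac:(lra)). specialize (By y ltac:(lra)).
  assert (0 < Rpower x s * exp (- x)) by (apply Rmult_lt_0_compat; apply exp_pos).
  assert (0 < Rpower y s * exp (- y)) by (apply Rmult_lt_0_compat; apply exp_pos).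
  rewrite RInt_gamma_integrand_succ by lra.
  replace (s * RInt (gamma_integrand s) x y
           + (Rpower x s * exp (- x) - Rpower y s * exp (- y)) - s * l)
    with (s * (RInt (gamma_integrand s) x y - l)
          + (Rpower x s * exp (- x) - Rpower y s * exp (- y))) by ring.
  assert (Rabs (s * (RInt (gamma_integrand s) x y - l)) < eps / 3).
  { rewrite Rabs_mult, Rabs_right by lra.
    apply Rlt_le_trans with (s * (eps / (3 * s))); [apply Rmult_lt_compat_l; auto|].
    right; field; lra. }
  assert (Rabs (Rpower x s * exp (- x) - Rpower y s * exp (- y)) < 2 * eps / 3)
    by (apply Rabs_def1; lra).
  eapply Rle_lt_trans; [apply Rabs_triang | lra].
Qed.

Lemma Gamma_pos_succ s : 0 < s -> 0 < Gamma s /\ Gamma (s + 1) = s * Gamma s.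
Proof.
  intros Hs. destruct (Gamma_integrable s Hs) as [l Hl].
  rewrite (Gamma_eq s l Hl). split.
  - apply Rlt_le_trans with (RInt (gamma_integrand s) 1 2).
    + apply RInt_gt_0; [lra | intros; apply gamma_integrand_pos |].
      intros t Ht. apply continuity_pt_filterlim, gamma_integrand_continuous; lra.
    + apply (RInt_le_improper_inf _ 0); auto; try lra.
      intros t Ht. left; apply gamma_integrand_pos.
  - apply Gamma_eq, Gamma_integral_succ; auto.
Qed.

(** * The estimate on each half *)

Lemma convex_on_le_chord F p q s : p < q -> convex_on F p q -> p <= s <= q ->
  F s <= (F p * (q - s) + F q * (s - p)) / (q - p).
Proof.
  intros Hpq Hcv Hs. set (lam := (q - s) / (q - p)).
  assert (Hl : 0 <= lam <= 1).
  { assert (E : lam * (q - p) = q - s) by (unfold lam; field; lra). clearbody lam. nra. }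
  pose proof (Hcv p q lam ltac:(lra) ltac:(lra) Hl) as K.
  replace (lam * p + (1 - lam) * q) with s in K by (unfold lam; field; lra).
  replace ((F p * (q - s) + F q * (s - p)) / (q - p)) with (lam * F p + (1 - lam) * F q)
    by (unfold lam; field; lra).
  exact K.
Qed.

Lemma Rabs_sub_le_of_derive (f fd P Pd : R -> R) u v : u <= v ->
  (forall s, u <= s <= v -> derivable_pt_lim f s (fd s)) ->
  (forall s, u <= s <= v -> derivable_pt_lim P s (Pd s)) ->
  (forall s, u <= s <= v -> Rabs (fd s) <= Pd s) ->
  Rabs (f v - f u) <= P v - P u.
Proof.
  intros Huv Hf HP Hle.
  destruct (Req_dec u v) as [<-|Hne].
  { rewrite !Rminus_diag, Rabs_R0. lra. }
  destruct (MVT_cor2 (fun s => f s - P s) (fun s => fd s - Pd s) u v ltac:(lra))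
    as [c1 [E1 Hc1]].
  { intros s Hs. apply derivable_pt_lim_minus; auto. }
  destruct (MVT_cor2 (fun s => f s + P s) (fun s => fd s + Pd s) u v ltac:(lra))
    as [c2 [E2 Hc2]].
  { intros s Hs. apply derivable_pt_lim_plus; auto. }
  pose proof (Hle c1 ltac:(lra)) as K1. pose proof (Hle c2 ltac:(lra)) as K2.
  apply Rabs_le_between in K1. apply Rabs_le_between in K2.
  assert ((fd c1 - Pd c1) * (v - u) <= 0) by (apply Rmult_le_0_r; lra).
  assert (0 <= (fd c2 + Pd c2) * (v - u)) by (apply Rmult_le_pos; lra).
  apply Rabs_le. lra.
Qed.

Definition chord_primitive (p q A B s : R) : R :=
  (A * (q * s - s * s / 2) + B * (s * s / 2 - p * s)) / (q - p).

(* A convex [|f'|] lies below its chord, whose primitive is [chord_primitive]. *)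
Lemma Rabs_sub_le_chord_primitive (f fd : R -> R) p q u v : p < q ->
  (forall y, p <= y <= q -> derivable_pt_lim f y (fd y)) ->
  convex_on (fun y => Rabs (fd y)) p q -> p <= u -> u <= v -> v <= q ->
  Rabs (f v - f u) <= chord_primitive p q (Rabs (fd p)) (Rabs (fd q)) v
                      - chord_primitive p q (Rabs (fd p)) (Rabs (fd q)) u.
Proof.
  intros Hpq Hf Hcv Hu Huv Hv.
  apply (Rabs_sub_le_of_derive f fd _
           (fun s => (Rabs (fd p) * (q - s) + Rabs (fd q) * (s - p)) / (q - p))); auto.
  - intros s Hs. apply Hf; lra.
  - intros s Hs. apply is_derive_Reals. unfold chord_primitive.
    auto_derive; auto. field. lra.
  - intros s Hs. apply (convex_on_le_chord (fun y => Rabs (fd y))); auto; lra.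
Qed.

Definition half_bound (al D U A B : R) : R :=
  A * (D * Rpower U (al + 1) / (al + 1) - Rpower U (al + 2) / (al + 2))
  + B * (Rpower U (al + 2) / (al + 2)).

Lemma chord_primitive_expand p q A B r s : p < q ->
  chord_primitive p q A B r - chord_primitive p q A B s =
  (chord_primitive p q A B r - chord_primitive p q A B p) + (- A) * (s - p)
  + (A - B) / (2 * (q - p)) * (s - p) * (s - p).
Proof. intros Hpq. unfold chord_primitive. field. lra. Qed.

Lemma kernel_primitive_chord p q r A B S al : 0 < al -> p < q -> p < r ->
  kernel_primitive (S * (chord_primitive p q A B r - chord_primitive p q A B p))
    (S * - A) (S * ((A - B) / (2 * (q - p)))) al (r - p)
  = S / (al * (q - p)) * half_bound al (q - p) (r - p) A B.
Proof.
  intros Hal Hpq Hpr. unfold kernel_primitive, half_bound, chord_primitive.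
  rewrite !Rpower_plus_1, !Rpower_plus_2 by lra.
  field. lra.
Qed.

Section LeftHalf.

Variables (a m b al S : R) (h hd f fd g : R -> R).
Hypothesis Ham : a < m.
Hypothesis Hmb : m < b.
Hypothesis Hal : 0 < al.
Hypothesis Hmon : forall x y, a <= x <= b -> a <= y <= b -> x < y -> h x < h y.
Hypothesis Hdw : forall t, a <= t <= b -> deriv_within h a b t (hd t).
Hypothesis Hhd : cont_on hd a b.
Hypothesis Hf : forall y, h a <= y <= h b -> derivable_pt_lim f y (fd y).
Hypothesis Hcv : convex_on (fun y => Rabs (fd y)) (h a) (h b).
Hypothesis Hg : cont_on g a b.
Hypothesis HS : forall t, a < t < m -> Rabs (g t) <= S.

Let K t := Rpower (h t - h a) (al - 1) * hd t.

Lemma h_between t : a <= t <= b -> h a <= h t <= h b.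
Proof.
  intros Ht. split.
  - destruct (Req_dec t a) as [->|]; [lra|]. left; apply Hmon; lra.
  - destruct (Req_dec t b) as [->|]; [lra|]. left; apply Hmon; lra.
Qed.

Lemma h_shift_derive t : a < t < b -> derivable_pt_lim (fun t => h t - h a) t (hd t).
Proof.
  intros Ht. rewrite <- (Rminus_0_r (hd t)).
  apply derivable_pt_lim_minus; [|apply derivable_pt_lim_const].
  apply (deriv_within_derivable_pt_lim h a b); auto. apply Hdw; lra.
Qed.

Lemma kernel_nonneg t : a < t < m -> 0 <= K t.
Proof.
  intros Ht. apply Rmult_le_pos; [left; apply exp_pos|].
  apply (derivable_pt_lim_nonneg_of_increasing h hd a b t Hmon); [lra|].
  apply (deriv_within_derivable_pt_lim h a b); [apply Hdw|]; lra.
Qed.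

Lemma kernel_continuous t : a < t < m -> continuity_pt K t.
Proof.
  intros Ht. apply continuity_pt_mult; [|apply (cont_on_continuity_pt hd a b); auto; lra].
  apply (continuity_pt_comp (fun t => h t - h a) (fun x => Rpower x (al - 1))).
  - apply derivable_continuous_pt. eexists. apply h_shift_derive; lra.
  - apply derivable_continuous_pt. eexists. apply derivable_pt_lim_power.
    assert (h a < h t) by (apply Hmon; lra). lra.
Qed.

Lemma is_improper_RInt_weight c0 c1 c2 :
  is_improper_RInt (fun t => K t * (c0 + c1 * (h t - h a) + c2 * (h t - h a) * (h t - h a)))
    a m (kernel_primitive c0 c1 c2 al (h m - h a)).
Proof.
  apply (is_improper_RInt_kernel (fun t => h t - h a)); auto.
  - intros t Ht. apply h_shift_derive. lra.
  - intros t Ht. apply (cont_on_continuity_pt hd a b); auto. lra.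
  - intros t Ht. assert (h a < h t) by (apply Hmon; lra). lra.
  - intros eps He.
    destruct (deriv_within_continuous h a b a (hd a) (Hdw a ltac:(lra)) eps He)
      as [del [Hdel Hcont]].
    exists (Rmin del (b - a)). split; [apply Rmin_pos; lra|]. intros t Ht.
    pose proof (Rmin_l del (b - a)). pose proof (Rmin_r del (b - a)).
    specialize (Hcont t ltac:(lra) ltac:(rewrite Rabs_right; lra)).
    apply Rabs_def2 in Hcont. lra.
Qed.

Lemma left_integrable : exists l, is_improper_RInt (fun t => K t * g t) a m l.
Proof.
  destruct (is_improper_RInt_dominated (fun t => K t * g t)
              (fun t => K t * (S + 0 * (h t - h a) + 0 * (h t - h a) * (h t - h a)))
              a m (kernel_primitive S 0 0 al (h m - h a)) Ham) as [l [Hl _]]; eauto.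
  - intros t Ht. apply continuity_pt_mult; [apply kernel_continuous; auto|].
    apply (cont_on_continuity_pt g a b); auto. lra.
  - intros t Ht. pose proof (kernel_nonneg t Ht). pose proof (HS t Ht).
    rewrite Rabs_mult, Rabs_right by lra. apply Rmult_le_compat_l; lra.
  - apply is_improper_RInt_weight.
Qed.

Lemma left_error_integrable : exists l,
  is_improper_RInt (fun t => K t * (g t * (f (h m) - f (h t)))) a m l /\
  Rabs l <= S / (al * (h b - h a)) *
    half_bound al (h b - h a) (h m - h a) (Rabs (fd (h a))) (Rabs (fd (h b))).
Proof.
  set (A := Rabs (fd (h a))). set (B := Rabs (fd (h b))).
  set (L := chord_primitive (h a) (h b) A B).
  assert (Hab : h a < h b) by (apply Hmon; lra).
  assert (Ham' : h a < h m) by (apply Hmon; lra).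
  rewrite <- kernel_primitive_chord by auto. fold L.
  apply (is_improper_RInt_dominated _
           (fun t => K t * (S * (L (h m) - L (h a)) + S * - A * (h t - h a)
                            + S * ((A - B) / (2 * (h b - h a))) * (h t - h a) * (h t - h a))));
    [auto | | | apply is_improper_RInt_weight].
  - intros t Ht. apply continuity_pt_mult; [apply kernel_continuous; auto|].
    apply continuity_pt_mult; [apply (cont_on_continuity_pt g a b); auto; lra|].
    apply continuity_pt_minus; [apply continuity_pt_const; intros ? ?; reflexivity|].
    apply (continuity_pt_comp h f); apply derivable_continuous_pt; eexists.
    + apply (deriv_within_derivable_pt_lim h a b); [apply Hdw|]; lra.
    + apply Hf, h_between; lra.
  - intros t Ht. pose proof (kernel_nonneg t Ht). pose proof (HS t Ht).
    pose proof (h_between t ltac:(lra)). pose proof (h_between m ltac:(lra)).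
    assert (h t < h m) by (apply Hmon; lra).
    rewrite Rabs_mult, (Rabs_right (K t)), Rabs_mult by lra.
    apply Rmult_le_compat_l; [lra|].
    replace (S * (L (h m) - L (h a)) + S * - A * (h t - h a)
             + S * ((A - B) / (2 * (h b - h a))) * (h t - h a) * (h t - h a))
      with (S * (L (h m) - L (h t)))
      by (unfold L; rewrite (chord_primitive_expand _ _ _ _ (h m) (h t)); auto; ring).
    apply Rmult_le_compat; try apply Rabs_pos; auto.
    apply (Rabs_sub_le_chord_primitive f fd); auto; lra.
Qed.

Lemma left_half_estimate :
  exists l1 l3,
    is_improper_RInt (fun t => Rpower (h t - h a) (al - 1) * hd t * g t) a m l1 /\
    is_improper_RInt (fun t => Rpower (h t - h a) (al - 1) * hd t * (g t * f (h t))) a m l3 /\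
    Rabs (f (h m) * l1 - l3) <= S / (al * (h b - h a)) *
      half_bound al (h b - h a) (h m - h a) (Rabs (fd (h a))) (Rabs (fd (h b))).
Proof.
  destruct left_integrable as [l1 H1]. destruct left_error_integrable as [lE [HE HlE]].
  exists l1, (f (h m) * l1 + (-1) * lE). split; [exact H1|split].
  - apply is_improper_RInt_ext
      with (fun t => f (h m) * (K t * g t) + (-1) * (K t * (g t * (f (h m) - f (h t))))).
    + intros t _. unfold K. ring.
    + apply is_improper_RInt_lincomb; auto.
  - replace (f (h m) * l1 - (f (h m) * l1 + -1 * lE)) with lE by ring. exact HlE.
Qed.

End LeftHalf.

Lemma convex_on_reflect F c d :
  convex_on F c d -> convex_on (fun y => F (- y)) (- d) (- c).
Proof.
  intros Hcv x y lam Hx Hy Hl.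
  replace (- (lam * x + (1 - lam) * y)) with (lam * - x + (1 - lam) * - y) by ring.
  apply Hcv; auto; lra.
Qed.

Lemma cont_on_reflect f a b : cont_on f a b -> cont_on (fun t => f (- t)) (- b) (- a).
Proof.
  intros Hf t Ht eps He. destruct (Hf (- t) ltac:(lra) eps He) as [del [Hdel K]].
  exists del. split; auto. intros s Hs Hst. apply K; [lra|].
  replace (- s - - t) with (- (s - t)) by ring. rewrite Rabs_Ropp. exact Hst.
Qed.

Lemma deriv_within_reflect f a b t l :
  deriv_within f a b (- t) l -> deriv_within (fun s => - f (- s)) (- b) (- a) t l.
Proof.
  intros Hf eps He. destruct (Hf eps He) as [del [Hdel K]].
  exists del. split; auto. intros s Hs Hst Hd.
  replace ((- f (- s) - - f (- t)) / (s - t)) with ((f (- s) - f (- t)) / (- s - - t))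
    by (field; lra).
  apply K; [lra | lra |]. replace (- s - - t) with (- (s - t)) by ring.
  rewrite Rabs_Ropp. exact Hd.
Qed.

Lemma derivable_pt_lim_reflect f x l :
  derivable_pt_lim f (- x) l -> derivable_pt_lim (fun t => f (- t)) x (- l).
Proof.
  intros H. replace (- l) with (l * -1) by ring.
  apply (derivable_pt_lim_comp (fun t => - t) f); auto.
  apply derivable_pt_lim_opp, derivable_pt_lim_id.
Qed.

(* The right half is the left half of the data reflected through [t |-> - t]. *)
Lemma right_half_estimate a m b al S (h hd f fd g : R -> R) :
  a < m -> m < b -> 0 < al ->
  (forall x y, a <= x <= b -> a <= y <= b -> x < y -> h x < h y) ->
  (forall t, a <= t <= b -> deriv_within h a b t (hd t)) ->
  cont_on hd a b ->
  (forall y, h a <= y <= h b -> derivable_pt_lim f y (fd y)) ->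
  convex_on (fun y => Rabs (fd y)) (h a) (h b) ->
  cont_on g a b ->
  (forall t, m < t < b -> Rabs (g t) <= S) ->
  exists l2 l4,
    is_improper_RInt (fun t => Rpower (h b - h t) (al - 1) * hd t * g t) m b l2 /\
    is_improper_RInt (fun t => Rpower (h b - h t) (al - 1) * hd t * (g t * f (h t))) m b l4 /\
    Rabs (f (h m) * l2 - l4) <= S / (al * (h b - h a)) *
      half_bound al (h b - h a) (h b - h m) (Rabs (fd (h b))) (Rabs (fd (h a))).
Proof.
  intros Ham Hmb Hal Hmon Hdw Hhd Hf Hcv Hg HS.
  destruct (left_half_estimate (- b) (- m) (- a) al S (fun t => - h (- t))
              (fun t => hd (- t)) (fun y => f (- y)) (fun y => - fd (- y)) (fun t => g (- t)))
    as [l2 [l4 [H2 [H4 Hbound]]]]; rewrite ?Ropp_involutive; try lra.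
  - intros x y Hx Hy Hxy. apply Ropp_lt_contravar, Hmon; lra.
  - intros t Ht. apply deriv_within_reflect, Hdw. lra.
  - apply cont_on_reflect; auto.
  - intros y Hy. apply derivable_pt_lim_reflect, Hf. lra.
  - intros x y lam Hx Hy Hl. rewrite !Rabs_Ropp.
    exact (convex_on_reflect (fun y => Rabs (fd y)) _ _ Hcv x y lam Hx Hy Hl).
  - apply cont_on_reflect; auto.
  - intros t Ht. apply HS. lra.
  - exists l2, l4. split; [|split].
    + apply is_improper_RInt_reflect. revert H2. apply is_improper_RInt_ext.
      intros t _. rewrite !Ropp_involutive. do 3 f_equal. ring.
    + apply is_improper_RInt_reflect. revert H4. apply is_improper_RInt_ext.
      intros t _. rewrite !Ropp_involutive. do 3 f_equal. ring.
    + rewrite !Ropp_involutive, !Rabs_Ropp in Hbound.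
      replace (- h a - - h b) with (h b - h a) in Hbound by ring.
      replace (- h m - - h b) with (h b - h m) in Hbound by ring.
      exact Hbound.
Qed.


Definition clamp (a b t : R) : R := Rmax a (Rmin b t).

Lemma clamp_between a b t : a <= b -> a <= clamp a b t <= b.
Proof. intros Hab. unfold clamp, Rmax, Rmin. repeat destruct (Rle_dec _ _); lra. Qed.

Lemma clamp_id a b t : a <= t <= b -> clamp a b t = t.
Proof. intros H. unfold clamp, Rmax, Rmin. repeat destruct (Rle_dec _ _); lra. Qed.

Lemma clamp_lipschitz a b s t : a <= b -> Rabs (clamp a b s - clamp a b t) <= Rabs (s - t).
Proof.
  intros Hab. unfold clamp, Rmax, Rmin.
  repeat destruct (Rle_dec _ _); unfold Rabs; repeat destruct (Rcase_abs _); lra.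
Qed.

(* Composing with [clamp] turns continuity relative to [a, b] into continuity
   on all of R, so that [continuity_ab_maj] applies. *)
Lemma sup_norm_bound (g : R -> R) a b c d : a <= c -> c <= d -> d <= b ->
  cont_on g a b -> forall t, c <= t <= d -> Rabs (g t) <= sup_norm g c d.
Proof.
  intros Hac Hcd Hdb Hg.
  set (G := fun t => Rabs (g (clamp a b t))).
  assert (CG : forall t, continuity_pt G t).
  { intros t. apply continuity_pt_eps. intros eps He.
    destruct (Hg (clamp a b t) (clamp_between a b t ltac:(lra)) eps He) as [del [Hd K]].
    exists del. split; auto. intros s Hs.
    eapply Rle_lt_trans; [apply Rabs_triang_inv2|].
    apply K; [apply clamp_between; lra|].
    eapply Rle_lt_trans; [apply clamp_lipschitz; lra | exact Hs]. }
  destruct (continuity_ab_maj G c d Hcd (fun t _ => CG t)) as [tmax [Hmax _]].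
  set (E := fun y => exists t, c <= t <= d /\ y = Rabs (g t)).
  assert (HE : exists l, is_lub E l).
  { destruct (completeness E) as [l Hl]; [| |exists l; exact Hl].
    - exists (G tmax). intros y [t [Ht ->]].
      specialize (Hmax t Ht). unfold G in Hmax. rewrite clamp_id in Hmax by lra. exact Hmax.
    - exists (Rabs (g c)), c. split; [lra | auto]. }
  destruct (choose_R_spec _ HE) as [Hub _].
  intros t Ht. apply Hub. exists t. auto.
Qed.

Theorem theorem2p1 (a b alpha : R) (h hd f fd g : R -> R) :
  a < b -> 0 < alpha ->
  (forall x y, a <= x <= b -> a <= y <= b -> x < y -> h x < h y) ->
  (forall t, a <= t <= b -> deriv_within h a b t (hd t)) ->
  cont_on hd a b ->
  (exists c d, c < h a /\ h b < d /\
     forall y, c < y < d -> derivable_pt_lim f y (fd y)) ->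
  Riemann_integrable fd (h a) (h b) ->
  convex_on (fun y => Rabs (fd y)) (h a) (h b) ->
  cont_on g a b ->
  let m := (a + b) / 2 in
  let D := h b - h a in
  let U := h m - h a in
  let V := h b - h m in
  let gf := fun t => g t * f (h t) in
  Rabs (f (h m) * (J_right alpha h hd g m a + J_left alpha h hd g m b)
        - (J_right alpha h hd gf m a + J_left alpha h hd gf m b))
  <= sup_norm g a m / (D * Gamma (alpha + 1)) *
       (Rabs (fd (h a)) * (D * Rpower U (alpha + 1) / (alpha + 1)
                           - Rpower U (alpha + 2) / (alpha + 2))
        + Rabs (fd (h b)) * (Rpower U (alpha + 2) / (alpha + 2)))
   + sup_norm g m b / (D * Gamma (alpha + 1)) *
       (Rabs (fd (h b)) * (D * Rpower V (alpha + 1) / (alpha + 1)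
                           - Rpower V (alpha + 2) / (alpha + 2))
        + Rabs (fd (h a)) * (Rpower V (alpha + 2) / (alpha + 2))).
Proof.
  intros Hab Hal Hmon Hdw Hhd [c [d [Hc [Hd Hf]]]] _ Hcv Hg m D U V gf.
  assert (Hm : a < m < b) by (unfold m; lra).
  assert (Hf' : forall y, h a <= y <= h b -> derivable_pt_lim f y (fd y))
    by (intros y Hy; apply Hf; lra).
  destruct (left_half_estimate a m b alpha (sup_norm g a m) h hd f fd g)
    as [l1 [l3 [H1 [H3 HL]]]]; auto; try lra.
  { intros t Ht. apply (sup_norm_bound g a b); auto; lra. }
  destruct (right_half_estimate a m b alpha (sup_norm g m b) h hd f fd g)
    as [l2 [l4 [H2 [H4 HR]]]]; auto; try lra.
  { intros t Ht. apply (sup_norm_bound g a b); auto; lra. }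
  destruct (Gamma_pos_succ alpha Hal) as [HG HG1].
  unfold J_right, J_left, gf.
  rewrite (is_improper_RInt_impint _ a m l1), (is_improper_RInt_impint _ a m l3),
    (is_improper_RInt_impint _ m b l2), (is_improper_RInt_impint _ m b l4), HG1 by (auto; lra).
  fold D U in HL. fold D V in HR.
  assert (HD : 0 < D) by (assert (h a < h b) by (apply Hmon; lra); unfold D; lra).
  apply Rle_trans with (/ Gamma alpha *
    (sup_norm g a m / (alpha * D) * half_bound alpha D U (Rabs (fd (h a))) (Rabs (fd (h b)))
     + sup_norm g m b / (alpha * D) * half_bound alpha D V (Rabs (fd (h b))) (Rabs (fd (h a))))).
  - replace (f (h m) * (/ Gamma alpha * l1 + / Gamma alpha * l2)
             - (/ Gamma alpha * l3 + / Gamma alpha * l4))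
      with (/ Gamma alpha * ((f (h m) * l1 - l3) + (f (h m) * l2 - l4))) by ring.
    rewrite Rabs_mult, Rabs_right by (left; apply Rinv_0_lt_compat; lra).
    apply Rmult_le_compat_l; [left; apply Rinv_0_lt_compat; lra|].
    eapply Rle_trans; [apply Rabs_triang | lra].
  - right. unfold half_bound. field. lra.
Qed.
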